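(* Assume the setting in the context (in particular the Causal Faithfulness Condition). Let $x_i,x_j,x_k,x_u\in X$ be distinct. Suppose that $x_k$ is a parent of $x_i$ or a parent of $x_j$, that $x_u$ is an ancestor of $x_i$, and that $x_u\perp\!\!\!\perp x_k\mid x_i$. Then $x_k$ is a parent of $x_j$.
   Context: Model: $X$ is a finite set of observed random variables and $U$ a finite set of unobserved random variables; $V=X\cup U$ and $G=(V,E)$ is a DAG on $V$. Each $v_i\in V$ satisfies $v_i=\sum_{x_j\in \mathrm{pa}(v_i)\cap X} f^{(i)}_j(x_j)+\sum_{u_k\in\mathrm{pa}(v_i)\cap U} f^{(i)}_k(u_k)+n_i$, where the $f$'s are nonlinear functions and the external noises $n_i$ are jointly independent. ''Parent'', ''ancestor'', ''path'', ''d-separation'' refer to $G$. Causal Faithfulness Condition (CFC): any conditional independence among variables of $V$ that is not entailed by d-separation in $G$ does not hold. $\perp\!\!\!\perp$ denotes statistical independence. *)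

From HB Require Import structures.
From mathcomp Require Import all_boot all_order all_algebra.
From mathcomp Require Import all_classical all_reals all_analysis.
Set Implicit Arguments. Unset Strict Implicit. Unset Printing Implicit Defensive.
Import Order.TTheory GRing.Theory Num.Theory.
Local Open Scope classical_set_scope.
Local Open Scope ring_scope.

Definition acyclic (V : finType) (E : rel V) : Prop :=
  forall x y : V, E x y -> ~~ connect E y x.

Definition is_parent (V : finType) (E : rel V) (a b : V) : bool := E a b.

Definition is_ancestor (V : finType) (E : rel V) (a b : V) : bool :=
  [exists w, E a w && connect E w b].

Definition d_connected (V : finType) (E : rel V) (Z : {set V}) (a b : V) : Prop :=
  exists s : seq V,
    [/\ [/\ (0 < size s)%N, nth a s 0 = a & nth a s (size s).-1 = b], uniq s,
        (forall k, (k.+1 < size s)%N ->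
            E (nth a s k) (nth a s k.+1) || E (nth a s k.+1) (nth a s k))
      & (forall k, (0 < k)%N -> (k.+1 < size s)%N ->
            let l := nth a s k.-1 in
            let m := nth a s k in
            let r := nth a s k.+1 in
            if E l m && E r m
            then (exists2 z, z \in Z & connect E m z)
            else m \notin Z)].

Definition d_separated (V : finType) (E : rel V) (Z : {set V}) (a b : V) : Prop :=
  ~ d_connected E Z a b.

Definition bounded_fun (R : realType) (f : R -> R) : Prop :=
  exists M : R, forall x, `|f x| <= M.

(* Conditional independence of real random variables X and Y given Z:
   for every bounded Borel f, a version of E[f(X) | Y, Z] can be chosen as a
   (bounded Borel) function of Z alone, i.e.
   E[f(X) 1_{Y in B1, Z in B2}] = E[phi(Z) 1_{Y in B1, Z in B2}] for all Borel B1, B2. *)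
Definition cond_indep d (T : measurableType d) (R : realType) (P : probability T R)
    (X Y Z : T -> R) : Prop :=
  forall f : R -> R, measurable_fun setT f -> bounded_fun f ->
  exists phi : R -> R,
    [/\ measurable_fun setT phi, bounded_fun phi &
      forall B1 B2 : set R, measurable B1 -> measurable B2 ->
        (\int[P]_x ((f (X x) * \1_(Y @^-1` B1 `&` Z @^-1` B2) x)%:E)
         = \int[P]_x ((phi (Z x) * \1_(Y @^-1` B1 `&` Z @^-1` B2) x)%:E))%E].

Definition mutually_indep d (T : measurableType d) (R : realType) (P : probability T R)
    (I : finType) (N : I -> T -> R) : Prop :=
  forall (J : {set I}) (B : I -> set R), (forall j, measurable (B j)) ->
    P (\bigcap_(j in [set j | j \in J]) (N j @^-1` B j))
    = (\prod_(j in J) P (N j @^-1` B j))%E.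

Definition nonlinear (R : realType) (f : R -> R) : Prop :=
  ~ (exists a b : R, forall x, f x = a * x + b).

From HB Require Import structures.
From mathcomp Require Import all_boot all_order all_algebra.
From mathcomp Require Import all_classical all_reals all_analysis.
From mathcomp Require Import zify.
Import Order.TTheory GRing.Theory Num.Theory.

(* By faithfulness, [xu _||_ xk | xi] forces [xu] and [xk] to be d-separated
   by [xi], so it suffices to exhibit a d-connecting path when [xk -> xi].
   Follow a directed path from [xu] to [xi] up to its first visit of [xi] or
   [xk].  If [xk] comes first, the directed path [xu ~> xk] avoids [xi] and has
   no colliders.  Otherwise [xu ~> xi <- xk] is d-connecting: its only
   collider is [xi], which is conditioned on. *)

Set Implicit Arguments.
Unset Strict Implicit.

Section DSeparation.
Variables (V : finType) (E : rel V).

Lemma connect_first_hit (c k : V) : c != k -> forall p a,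
  path E a p -> last a p = c ->
  connect [rel x y | E x y && (y != k)] a c \/
  connect [rel x y | E x y && (y != c)] a k.
Proof.
move=> neq_ck; elim=> [|y p IH] a /=; first by move=> _ ->; left.
case/andP=> Eay p_path p_last.
have [eq_yk|neq_yk] := eqVneq y k.
  by right; apply: connect1; rewrite /= -eq_yk Eay eq_yk eq_sym.
have [eq_yc|neq_yc] := eqVneq y c.
  by left; apply: connect1; rewrite /= -eq_yc Eay eq_yc.
by case: (IH y p_path p_last) => h; [left | right];
  apply: connect_trans h; apply: connect1; rewrite /= Eay ?neq_yk ?neq_yc.
Qed.

Lemma path_avoid_notin (k : V) p a :
  path [rel x y | E x y && (y != k)] a p -> k \notin p.
Proof.
elim: p a => [|y p IH] a //= /andP [/andP [_ neq_yk] p_path].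
by rewrite in_cons negb_or eq_sym neq_yk (IH y p_path).
Qed.

Hypothesis E_acyclic : acyclic E.

Lemma acyclic_asym m r : E m r -> E r m = false.
Proof.
by move=> Emr; apply/negP => Erm; move: (E_acyclic Emr); rewrite (connect1 Erm).
Qed.

Lemma directed_path_d_connected c a p :
  path E a p -> uniq (a :: p) -> c \notin a :: p ->
  d_connected E [set c]%SET a (last a p).
Proof.
move=> p_path p_uniq c_notin; exists (a :: p); split => //.
- by split => //; rewrite (nth_last a (a :: p)).
- by move=> k lt_k; rewrite (pathP a p_path k lt_k).
- move=> [|k] // _ lt_k /=.
  rewrite (acyclic_asym (pathP a p_path k.+1 lt_k)) andbF finset.in_set1.
  apply: contra c_notin => /eqP <-.
  by apply: (@mem_nth _ a (a :: p) k.+1); rewrite /= ltnS ltnW.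
Qed.

Lemma collider_path_d_connected a p b :
  path E a p -> uniq (rcons (a :: p) b) -> E b (last a p) -> p != [::] ->
  d_connected E [set last a p]%SET a b.
Proof.
move=> p_path; rewrite rcons_uniq => /andP [b_notin ap_uniq] Eb p_nil.
have /andP [_ p_uniq] := ap_uniq.
have last_nth : last a p = nth a p (size p).-1 by rewrite nth_last.
have last_nth' : nth a (a :: p) (size p) = last a p by exact: (nth_last a (a :: p)).
exists (rcons (a :: p) b); split.
- by split; rewrite ?size_rcons //= nth_rcons /= ltnn eqxx.
- by rewrite rcons_uniq b_notin ap_uniq.
- move=> k; rewrite size_rcons ltnS => le_k.
  rewrite !nth_rcons le_k /= ltnS.
  case: (ltngtP k (size p)) le_k => [lt_k _|gt_k le_k|-> _].
  + by rewrite (pathP a p_path k lt_k).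
  + by move: le_k gt_k; rewrite /=; clear; lia.
  + by rewrite eqxx last_nth' Eb orbT.
- move=> [|k] // _; rewrite size_rcons ltnS => lt_k.
  rewrite !nth_rcons (ltnW lt_k) lt_k /= !ltnS.
  case: (ltngtP k.+1 (size p)) lt_k => [lt_k _|gt_k le_k|eq_k _].
  + rewrite (acyclic_asym (pathP a p_path k.+1 lt_k)) andbF finset.in_set1.
    rewrite last_nth nth_uniq //; move: lt_k; case: (size p) => [|n] //=; lia.
  + by move: le_k gt_k; rewrite /=; clear; lia.
  + have lt_k : (k < size p)%N by rewrite -eq_k.
    rewrite -eq_k eqxx (pathP a p_path k lt_k).
    have -> : nth a p k = last a p by rewrite last_nth -eq_k.
    rewrite Eb.
    by exists (last a p); rewrite ?finset.in_set1.
Qed.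

Lemma ancestor_parent_d_connected xi xk xu :
  xi != xk -> xu != xi -> xu != xk -> E xk xi -> is_ancestor E xu xi ->
  d_connected E [set xi]%SET xu xk.
Proof.
move=> neq_ik neq_ui neq_uk Eki /existsP [w /andP [Euw conn_wi]].
have /connectP [p p_path p_last] : connect E xu xi.
  exact: connect_trans (connect1 Euw) conn_wi.
case: (connect_first_hit neq_ik p_path (esym p_last)) => /connectP [q0 q0_path q0_last];
  case: (shortenP q0_path) q0_last => q q_path q_uniq _ q_last;
  have q_pathE : path E xu q by apply: sub_path q_path => x y /andP [].
- have xk_notin := path_avoid_notin q_path.
  rewrite q_last in Eki *; apply: collider_path_d_connected => //.
    by rewrite rcons_uniq in_cons negb_or eq_sym neq_uk xk_notin q_uniq.
  by apply: contraNneq neq_ui => q_nil; rewrite q_last q_nil.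
- have xi_notin := path_avoid_notin q_path.
  rewrite q_last; apply: directed_path_d_connected => //.
  by rewrite in_cons negb_or eq_sym neq_ui xi_notin.
Qed.

End DSeparation.

Local Open Scope classical_set_scope.
Local Open Scope ring_scope.

Theorem corollary2
  (V : finType) (E : rel V) (X : {set V})
  (R : realType) (d : measure_display) (T : measurableType d) (P : probability T R)
  (var noise : V -> T -> R) (f : V -> V -> R -> R)
  (hdag : acyclic E)
  (hf_meas : forall v w, measurable_fun setT (f v w))
  (hf_nonlin : forall v w, E w v -> nonlinear (f v w))
  (hnoise_meas : forall v, measurable_fun setT (noise v))
  (hnoise_indep : mutually_indep P noise)
  (hvar_meas : forall v, measurable_fun setT (var v))
  (hsem : forall v t,
     var v t = \sum_(w | E w v && (w \in X)) f v w (var w t)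
             + \sum_(w | E w v && (w \notin X)) f v w (var w t)
             + noise v t)
  (hCFC : forall a b c : V, a != b -> c != a -> c != b ->
     cond_indep P (var a) (var b) (var c) -> d_separated E [set c]%SET a b)
  (xi xj xk xu : V)
  (hxi : xi \in X) (hxj : xj \in X) (hxk : xk \in X) (hxu : xu \in X)
  (hdist : uniq [:: xi; xj; xk; xu])
  (hpar : is_parent E xk xi || is_parent E xk xj)
  (hanc : is_ancestor E xu xi)
  (hci : cond_indep P (var xu) (var xk) (var xi)) :
  is_parent E xk xj.
Proof.
rewrite /is_parent in hpar *; case: (E xk xj) hpar; rewrite ?orbF // => Eki; exfalso.
move: hdist; rewrite /= !inE !negb_or.
move=> /and4P [/and3P [_ neq_ik neq_iu] _ neq_ku _].
have neq_uk : xu != xk by rewrite eq_sym.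
have neq_ui : xu != xi by rewrite eq_sym.
apply: (hCFC xu xk xi neq_uk neq_iu neq_ik hci).
exact: (@ancestor_parent_d_connected V E hdag xi xk xu neq_ik neq_ui neq_uk Eki hanc).
Qed.
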